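(* Suppose Assumptions RA and ER hold. Then the identified set $\Theta_I(p_{df})$ for the proportion of defiers $p_{df}$ is $$\Theta_I(p_{df})=\Big[\max\Big\{\max_{s\in\{0,1\}}\sup_{A}\big\{\mathbb P(Y\in A,D=s\mid Z=1-s)-\mathbb P(Y\in A,D=s\mid Z=s)\big\},\,0\Big\},\ \min\{\mathbb E[D\mid Z=0],\mathbb E[1-D\mid Z=1]\}\Big]$$ (the supremum being over Borel sets $A\subseteq\mathcal Y$) if $$\max_{d\in\{0,1\}}\int_{\mathcal Y}\sup_{z\in\{0,1\}} f_{Y,D\mid Z}(y,d\mid z)\,d\mu(y)\le 1,$$ and $\Theta_I(p_{df})=\emptyset$ otherwise. In particular, the last displayed inequality is implied by Assumptions RA and ER.
   Context: Setup: $Z\in\{0,1\}$ is a binary instrument with $0<\mathbb P(Z=1)<1$, $D\in\{0,1\}$ a binary treatment, $Y$ a real outcome with support $\mathcal Y$. Latent variables: potential treatments $D_0,D_1\in\{0,1\}$ and potential outcomes $Y_{dz}$, $d,z\in\{0,1\}$ (outcome if treatment set to $d$ and instrument set to $z$). Observed data satisfy $D=D_1Z+D_0(1-Z)$ and $Y=(Y_{11}Z+Y_{10}(1-Z))D+(Y_{01}Z+Y_{00}(1-Z))(1-D)$. The type is $T=(D_0,D_1)$: always-takers $a=(1,1)$, never-takers $n=(0,0)$, compliers $c=(0,1)$, defiers $df=(1,0)$; $p_t=\mathbb P(T=t)$. Assumptions: RA (random assignment): $Z$ is independent of $(Y_{11},Y_{10},Y_{01},Y_{00},D_1,D_0)$.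 ER (exclusion restriction): $Y_{dz}=Y_{dz'}\equiv Y_d$ for all $d,z,z'$. MON (monotonicity): either $D_1\ge D_0$ (a.s.) or $D_0\ge D_1$ (a.s.). $f_{Y,D\mid Z}(y,d\mid z)\equiv f_{Y\mid D,Z}(y\mid d,z)\mathbb P(D=d\mid Z=z)$, where $f_{Y\mid D,Z}$ is the conditional density of $Y$ given $D=d,Z=z$ with respect to a known dominating measure $\mu$ on $\mathcal Y$. The identified set of a parameter under a set of assumptions is the set of values the parameter takes over all joint distributions of the latent variables and $Z$ that satisfy the assumptions and generate, through the model, the observed distribution of $(Y,D,Z)$; bounds are sharp if they coincide with the identified set. *)

From HB Require Import structures.
From mathcomp Require Import all_boot all_order all_algebra.
From mathcomp Require Import all_classical all_reals all_analysis measurable_realfun.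
Set Implicit Arguments. Unset Strict Implicit. Unset Printing Implicit Defensive.
Import Order.TTheory GRing.Theory Num.Theory.
Local Open Scope classical_set_scope.
Local Open Scope ring_scope.

Definition obsD (Om : Type) (D0 D1 Z : Om -> bool) (w : Om) : bool :=
  if Z w then D1 w else D0 w.

Definition obsY (R : Type) (Om : Type) (Yp : bool -> bool -> Om -> R)
  (D0 D1 Z : Om -> bool) (w : Om) : R :=
  Yp (obsD D0 D1 Z w) (Z w) w.

Definition latent_vec (R : Type) (Om : Type) (Yp : bool -> bool -> Om -> R)
  (D0 D1 : Om -> bool) (w : Om) : R * R * R * R * bool * bool :=
  (Yp true true w, Yp true false w, Yp false true w, Yp false false w, D1 w, D0 w).

(* A latent model on the probability space (Om, P), with potential outcomes
   Yp d z = Y_{dz}, potential treatments D0, D1 and instrument Z, satisfying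
   RA and ER, and generating the observed distribution described by
   pz = P(Z = 1) and Q d z A = P(Y in A, D = d | Z = z). *)
Definition RA_ER_model (R : realType) (pz : R)
  (Q : bool -> bool -> set R -> \bar R)
  (d : measure_display) (Om : measurableType d) (P : probability Om R)
  (Yp : bool -> bool -> Om -> R) (D0 D1 Z : Om -> bool) : Prop :=
  (forall a b, measurable_fun setT (Yp a b)) /\
      measurable_fun setT D0 /\ measurable_fun setT D1 /\ measurable_fun setT Z /\
      (forall (z : bool) (E : set (R * R * R * R * bool * bool)), measurable E ->
         P ([set w | Z w = z] `&` (latent_vec Yp D0 D1 @^-1` E))
         = (P [set w | Z w = z] * P (latent_vec Yp D0 D1 @^-1` E))%E) /\
      (forall (dd : bool) (w : Om), Yp dd true w = Yp dd false w) /\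
      P [set w | Z w] = pz%:E /\
      (forall (A : set R), measurable A -> forall dd z : bool,
         P [set w | A (obsY Yp D0 D1 Z w) /\ obsD D0 D1 Z w = dd /\ Z w = z]
         = (Q dd z A * P [set w | Z w = z])%E).

Definition pdf_identified_set (R : realType) (pz : R)
  (Q : bool -> bool -> set R -> \bar R) : set R :=
  [set p | exists (d : measure_display) (Om : measurableType d)
             (P : probability Om R) (Yp : bool -> bool -> Om -> R)
             (D0 D1 Z : Om -> bool),
           RA_ER_model pz Q P Yp D0 D1 Z /\
           P [set w | D0 w = true /\ D1 w = false] = p%:E].

Definition sup_diff (R : realType) (Q : bool -> bool -> set R -> \bar R)
  (s : bool) : \bar R :=
  ereal_sup [set (Q s (~~ s) A - Q s s A)%E | A in (measurable : set (set R))].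

Definition pdf_lower (R : realType) (Q : bool -> bool -> set R -> \bar R) : \bar R :=
  maxe (maxe (sup_diff Q false) (sup_diff Q true)) 0%E.

Definition pdf_upper (R : realType) (Q : bool -> bool -> set R -> \bar R) : \bar R :=
  mine (Q true false setT) (Q false true setT).

Definition density_cond (R : realType) (mu : {measure set R -> \bar R})
  (f : bool -> bool -> R -> \bar R) : Prop :=
  forall dd : bool, (\int[mu]_y maxe (f dd false y) (f dd true y) <= 1)%E.

From HB Require Import structures.
From mathcomp Require Import all_boot all_order all_algebra.
From mathcomp Require Import all_classical all_reals all_analysis measurable_realfun.
From mathcomp Require Import ring lra.
Set Implicit Arguments. Unset Strict Implicit. Unset Printing Implicit Defensive.
Import Order.TTheory GRing.Theory Num.Theory.
Local Open Scope classical_set_scope.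
Local Open Scope ring_scope.

(* Under RA and ER, Q d z A is the probability that Y_d lies in A and D_z = d.
   Since {D_(1-s) = s} is contained in {D_s = s} together with the defiers, every
   admissible p_df lies between the bounds; evaluating the lower bound at
   A = {f s s < f s (1-s)} and adding the upper bound yields the density condition.
   Conversely, for p between the bounds the s-takers receive a multiple of
   min (f s (1-s), f s s) of mass P(D = s | Z = 1-s) - p, which the bounds make
   possible, and compliers and defiers share what remains of f s s and f s (1-s);
   drawing Y_1, Y_0 independently given the type and Z as an independent coin
   realizes the data with exactly p defiers. *)

Lemma mulIe_pos (R : realType) (x y : \bar R) (r : R) : 0 < r ->
  (x * r%:E = y * r%:E)%E -> x = y.
Proof.
move=> r0 /(congr1 (fun t => t * r^-1%:E)%E).
by rewrite -!muleA -EFinM divff ?gt_eqF// !mule1.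
Qed.

Definition latent_Y (R : Type) (dd z : bool) (v : R * R * R * R * bool * bool) : R :=
  match dd, z with
  | true, true => v.1.1.1.1.1
  | true, false => v.1.1.1.1.2
  | false, true => v.1.1.1.2
  | false, false => v.1.1.2
  end.

Definition latent_D (R : Type) (z : bool) (v : R * R * R * R * bool * bool) : bool :=
  if z then v.1.2 else v.2.

Lemma measurable_latent_Y (R : realType) dd z : measurable_fun setT (@latent_Y R dd z).
Proof.
case: dd; case: z => /=;
repeat (apply: measurableT_comp; [exact: measurable_fst || exact: measurable_snd|]);
  exact: measurable_id || exact: measurable_fst || exact: measurable_snd.
Qed.

Lemma measurable_latent_D (R : realType) z : measurable_fun setT (@latent_D R z).
Proof.
case: z => /=; last exact: measurable_snd.
by apply: measurableT_comp; [exact: measurable_snd | exact: measurable_fst].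
Qed.

Definition latent_event (R : Type) dd z (A : set R) :=
  [set v : R * R * R * R * bool * bool | A (latent_Y dd z v) /\ latent_D z v = dd].

Lemma measurable_latent_event (R : realType) dd z (A : set R) : measurable A ->
  measurable (latent_event dd z A).
Proof.
move=> mA; apply: (measurableI (latent_Y dd z @^-1` A) (latent_D z @^-1` [set dd])).
- by rewrite -[X in measurable X]setTI; exact: measurable_latent_Y.
- by rewrite -[X in measurable X]setTI; exact: measurable_latent_D.
Qed.

Section latent_model.
Local Open Scope ereal_scope.
Context (R : realType) (pz : R) (Q : bool -> bool -> set R -> \bar R)
  (d : measure_display) (Om : measurableType d) (P : probability Om R)
  (Yp : bool -> bool -> Om -> R) (D0 D1 Z : Om -> bool).
Hypothesis pz01 : (0 < pz < 1)%R.
Hypothesis model : RA_ER_model pz Q P Yp D0 D1 Z.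

Let mYp dd z : measurable_fun setT (Yp dd z). Proof. by case: model. Qed.
Let mD0 : measurable_fun setT D0. Proof. by case: model => _ []. Qed.
Let mD1 : measurable_fun setT D1. Proof. by case: model => _ [_ []]. Qed.
Let mZ : measurable_fun setT Z. Proof. by case: model => _ [_ [_ []]]. Qed.

Definition potD (z : bool) (w : Om) : bool := if z then D1 w else D0 w.

Let mpotD z : measurable_fun setT (potD z). Proof. by case: z. Qed.

Definition defiers := [set w | D0 w = true /\ D1 w = false].

Lemma defiersE s : defiers = [set w | potD (~~ s) w = s /\ potD s w = ~~ s].
Proof. by case: s; apply/seteqP; split => w /= [? ?]; split. Qed.

Lemma measurable_Y_potD dd z z' b (A : set R) : measurable A ->
  measurable [set w | A (Yp dd z w) /\ potD z' w = b].
Proof.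
move=> mA; apply: (measurableI (Yp dd z @^-1` A) (potD z' @^-1` [set b])).
- by rewrite -[X in measurable X]setTI; exact: mYp.
- by rewrite -[X in measurable X]setTI; exact: mpotD.
Qed.

Lemma measurable_defiers : measurable defiers.
Proof.
apply: (measurableI (D0 @^-1` [set true]) (D1 @^-1` [set false])).
- by rewrite -[X in measurable X]setTI; exact: mD0.
- by rewrite -[X in measurable X]setTI; exact: mD1.
Qed.

Lemma P_Z z : P [set w | Z w = z] = (if z then pz else 1 - pz)%:E.
Proof.
have PZ1 : P [set w | Z w] = pz%:E by case: model => _ [_ [_ [_ [_ [_ []]]]]].
have mZ1 : measurable [set w | Z w].
  by rewrite -[X in measurable X]setTI; exact: mZ.
case: z; first by rewrite -PZ1; congr (P _); apply/seteqP; split => w /=.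
rewrite EFinB -PZ1 -probability_setC//; congr (P _); apply/seteqP; split => w /=.
  by move=> ->.
by case: (Z w).
Qed.

Lemma observed_eventE dd z (A : set R) :
  [set w | A (obsY Yp D0 D1 Z w) /\ obsD D0 D1 Z w = dd /\ Z w = z] =
  [set w | Z w = z] `&` (latent_vec Yp D0 D1 @^-1` latent_event dd z A).
Proof.
apply/seteqP; split => w; rewrite /obsY /obsD /latent_vec /latent_event /preimage /=;
by case: (Z w); case: (D0 w); case: (D1 w); case: dd; case: z => /=;
  intuition; congruence.
Qed.

Lemma latent_eventE dd z (A : set R) :
  latent_vec Yp D0 D1 @^-1` latent_event dd z A =
  [set w | A (Yp dd false w) /\ potD z w = dd].
Proof.
have [_ [_ [_ [_ [_ [ER _]]]]]] := model.
by apply/seteqP; split => w; rewrite /latent_event /latent_vec /preimage /potD;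
  case: dd; case: z; rewrite /= ?ER.
Qed.

Lemma Q_latentE dd z (A : set R) : measurable A ->
  Q dd z A = P [set w | A (Yp dd false w) /\ potD z w = dd].
Proof.
move=> mA; case: model => _ [_ [_ [_ [RA [_ [_ obs]]]]]].
have Zpos : (0 < if z then pz else 1 - pz)%R.
  by case/andP: pz01 => ? ?; case: z => //; rewrite subr_gt0.
apply: (mulIe_pos Zpos).
rewrite -P_Z -obs// observed_eventE RA; last exact: measurable_latent_event.
by rewrite muleC latent_eventE.
Qed.

Lemma Q_diff_le_defiers s (A : set R) : measurable A ->
  Q s (~~ s) A - Q s s A <= P defiers.
Proof.
move=> mA; rewrite !Q_latentE//.
have mB := measurable_Y_potD s false s s mA.
rewrite leeBlDr; last exact: fin_num_measure.
apply: le_trans (measureU2 _ measurable_defiers mB).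
apply: le_measure; rewrite ?inE; [exact: measurable_Y_potD|exact: measurableU measurable_defiers mB|].
move=> w [Aw]; rewrite (defiersE s) /=.
by case: s {mB} Aw; rewrite /potD /=; case: (D0 w); case: (D1 w) => //= *;
  first [by left | by right].
Qed.

Lemma defiers_le_Q s : P defiers <= Q s (~~ s) setT.
Proof.
rewrite Q_latentE// (defiersE s); apply: le_measure; rewrite ?inE.
- by rewrite -(defiersE s); exact: measurable_defiers.
- exact: measurable_Y_potD.
- by move=> w [].
Qed.

Lemma defiers_in_bounds : pdf_lower Q <= P defiers <= pdf_upper Q.
Proof.
apply/andP; split.
- rewrite /pdf_lower ge_max measure_ge0 andbT ge_max.
  by apply/andP; split; apply: ge_ereal_sup => _ [A mA <-]; exact: Q_diff_le_defiers.
- by rewrite /pdf_upper le_min (defiers_le_Q true) (defiers_le_Q false).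
Qed.

End latent_model.

Lemma measure_fin_num_sub d (T : measurableType d) (R : realType)
  (m : {measure set T -> \bar R}) (A : set T) :
  measurable A -> m setT \is a fin_num -> m A \is a fin_num.
Proof.
move=> mA mT; rewrite ge0_fin_numE// (le_lt_trans (le_measure _ _ _ (subsetT A)))//.
- by rewrite inE.
- by rewrite inE.
- by rewrite -ge0_fin_numE.
Qed.

Section densities.
Local Open Scope ereal_scope.
Context d (T : measurableType d) (R : realType) (mu : {measure set T -> \bar R}).

Lemma ge0_integral_split (g u v : T -> \bar R) (B : set T) : measurable B ->
  measurable_fun setT g -> (forall x, 0 <= g x) ->
  {in B, g =1 u} -> {in ~` B, g =1 v} ->
  \int[mu]_x g x = \int[mu]_(x in B) u x + \int[mu]_(x in ~` B) v x.
Proof.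
move=> mB mg g0 gu gv.
rewrite -(setUv B) ge0_integral_setU//; first by congr (_ + _); exact: eq_integral.
- exact: measurableC.
- by rewrite setUv.
- by rewrite /disj_set setICr.
Qed.

Variables (m1 m2 : {measure set T -> \bar R}) (g1 g2 : T -> \bar R).
Hypotheses (mg1 : measurable_fun setT g1) (mg2 : measurable_fun setT g2).
Hypotheses (g1_ge0 : forall x, 0 <= g1 x) (g2_ge0 : forall x, 0 <= g2 x).
Hypothesis m1E : forall A, measurable A -> m1 A = \int[mu]_(x in A) g1 x.
Hypothesis m2E : forall A, measurable A -> m2 A = \int[mu]_(x in A) g2 x.
Hypotheses (m1_fin : m1 setT \is a fin_num) (m2_fin : m2 setT \is a fin_num).

Let B := [set x | g2 x < g1 x].

Let mB : measurable B.
Proof. by rewrite -[B]setTI; exact: measurable_lte. Qed.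

Let measure_setC (m : {measure set T -> \bar R}) :
  m setT \is a fin_num -> m (~` B) = m setT - m B.
Proof.
move=> mT; have mCB : measurable (~` B) by exact: measurableC.
by rewrite -(setUv B) measureU ?setUv ?setICr// [m B + _]addeC addeK// measure_fin_num_sub.
Qed.

Lemma integral_maxe_densities :
  \int[mu]_x maxe (g1 x) (g2 x) = (m1 B - m2 B) + m2 setT.
Proof.
rewrite (@ge0_integral_split _ g1 g2 B mB); last 4 first.
- exact: measurable_maxe.
- by move=> x; rewrite le_max g1_ge0.
- by move=> x; rewrite inE => /ltW /max_l.
- by move=> x; rewrite inE /B /= => /negP; rewrite -leNgt => /max_r.
rewrite -m1E// -m2E ?measure_setC//; last exact: measurableC.
by rewrite addeA addeAC.
Qed.

Lemma integral_mine_densities :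
  \int[mu]_x mine (g1 x) (g2 x) = m1 setT - (m1 B - m2 B).
Proof.
rewrite (@ge0_integral_split _ g2 g1 B mB); last 4 first.
- exact: measurable_mine.
- by move=> x; rewrite le_min g1_ge0 g2_ge0.
- by move=> x; rewrite inE => /ltW /min_r.
- by move=> x; rewrite inE /B /= => /negP; rewrite -leNgt => /min_l.
rewrite -m2E// -m1E ?measure_setC//; last exact: measurableC.
have f1 := measure_fin_num_sub mB m1_fin; have f2 := measure_fin_num_sub mB m2_fin.
rewrite -(fineK m1_fin) -(fineK f1) -(fineK f2) -!EFinB -EFinD; congr EFin; ring.
Qed.

End densities.

Definition ratio (R : realType) (a M : R) : R := if M == 0 then 0 else a / M.

Lemma ratioP (R : realType) (a M : R) : 0 <= a <= M ->
  0 <= ratio a M <= 1 /\ ratio a M * M = a.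
Proof.
move=> /andP[a0 aM]; rewrite /ratio; have [M0|M0] := eqVneq M 0.
  by subst M; split; [rewrite lexx ler01 | lra].
have Mpos : 0 < M by rewrite lt_neqAle eq_sym M0 (le_trans a0 aM).
split; last by rewrite mulfVK.
by apply/andP; split; [rewrite divr_ge0// ltW | rewrite ler_pdivrMr// mul1r].
Qed.

Lemma EFin_addeK (R : realType) (x z : R) (y : \bar R) :
  (x%:E + y)%E = z%:E -> y = (z - x)%:E.
Proof. by case: y => //= r [<-]; congr EFin; ring. Qed.

Section density_measure.
Local Open Scope ereal_scope.
Context d (T : measurableType d) (R : realType) (mu : {measure set T -> \bar R}).
Variables (g : T -> R) (mg : measurable_fun setT g) (g_ge0 : forall x, (0 <= g x)%R).

Definition density_measure of measurable_fun setT g & (forall x, (0 <= g x)%R) :=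
  fun A => \int[mu]_(x in A) (g x)%:E.

Let density_measure0 : density_measure mg g_ge0 set0 = 0.
Proof. exact: integral_set0. Qed.

Let density_measure_ge0 A : 0 <= density_measure mg g_ge0 A.
Proof. by apply: integral_ge0 => x _; rewrite lee_fin. Qed.

Let density_measure_sigma_additive : semi_sigma_additive (density_measure mg g_ge0).
Proof.
apply: semi_sigma_additive_nng_induced; first exact: measurableT_comp.
by move=> x; rewrite lee_fin.
Qed.

HB.instance Definition _ := isMeasure.Build _ _ _ (density_measure mg g_ge0)
  density_measure0 density_measure_ge0 density_measure_sigma_additive.

End density_measure.
Arguments density_measure {d T R} mu {g}.

Section normalization.
Local Open Scope ereal_scope.
Context d (T : measurableType d) (R : realType) (P0 : probability T R).

Lemma mnormalize_mass1 (m : {measure set T -> \bar R}) A :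
  m setT = 1 -> mnormalize m P0 A = m A.
Proof.
by move=> m1; rewrite /mnormalize m1 eqe oner_eq0 /= invr1 mule1.
Qed.

Lemma mass_mul_mnormalize (m m' : {measure set T -> \bar R}) (r : R) A : measurable A ->
  m' setT = r%:E -> m setT = r%:E -> m' setT * mnormalize m P0 A = m A.
Proof.
move=> mA -> mT; rewrite /mnormalize mT; case: ifPn => [/orP[/eqP r0|//]|].
- rewrite r0 mul0e; apply/esym/eqP; rewrite eq_le measure_ge0 andbT -r0 -mT.
  by apply: le_measure; rewrite ?inE.
- rewrite negb_or eqe => /andP[r0 _].
  by rewrite muleCA -EFinM mulfV ?mule1.
Qed.

End normalization.

Lemma product_diracE d1 d2 (T1 : measurableType d1) (T2 : measurableType d2)
  (R : realType) (m : {measure set T1 -> \bar R}) (t : T2) (b : pred T2) S :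
  measurable S -> measurable [set x | b x] ->
  (m \x \d_t)%E (S `*` [set x | b x]) = if b t then m S else 0%E.
Proof.
move=> mS mb; rewrite product_measure1E//.
transitivity (m S * ((t \in [set x | b x])%:R)%:E)%E; first by congr (_ * _)%E; exact: diracE.
have -> : (t \in [set x | b x]) = b t by apply/idP/idP => [/set_mem|/mem_set].
by case: (b t); rewrite ?mule1 ?mule0.
Qed.

Lemma bernoulli_prob_setT1 (R : realType) (p : R) : 0 <= p <= 1 ->
  bernoulli_prob p [set true] = p%:E.
Proof.
move=> p01; rewrite bernoulli_probE// !diracE mem_set// memNset//.
by rewrite mule1 mule0 adde0.
Qed.

Lemma measurable_bool_pair (X : set (bool * bool)) : measurable X.
Proof.
rewrite (_ : X = [set true] `*` [set b | X (true, b)] `|` [set false] `*` [set b | X (false, b)]).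
  by apply: measurableU; apply: measurableX.
by apply/seteqP; split => -[[] b] /=; [left|right|case=> -[]|case=> -[]].
Qed.

Section observed.
Local Open Scope ereal_scope.
Context (R : realType) (Q : bool -> bool -> {measure set R -> \bar R}).
Hypothesis Q1 : forall z : bool, Q false z setT + Q true z setT = 1.

Lemma Q_complement s : Q (~~ s) s setT + Q s s setT = 1.
Proof. by case: s; rewrite // addeC Q1. Qed.

Lemma Q_setT_le1 dd z : Q dd z setT <= 1.
Proof. by rewrite -(Q1 z); case: dd; [rewrite leeDr | rewrite leeDl]. Qed.

Lemma Q_setT_fin_num dd z : Q dd z setT \is a fin_num.
Proof. by rewrite ge0_fin_numE// (le_lt_trans (Q_setT_le1 dd z)) ?ltey. Qed.

Section density_condition.
Context (mu : {measure set R -> \bar R}) (f : bool -> bool -> R -> \bar R).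
Hypothesis mf : forall dd z, measurable_fun setT (f dd z).
Hypothesis f_ge0 : forall dd z y, 0 <= f dd z y.
Hypothesis Qf : forall dd z A, measurable A -> Q dd z A = \int[mu]_(y in A) f dd z y.

Lemma density_cond_of_bounds (p : \bar R) :
  pdf_lower Q <= p <= pdf_upper Q -> density_cond mu f.
Proof.
rewrite /pdf_lower /pdf_upper ge_max le_min => /andP[/andP[+ _] /andP[up1 up0]].
rewrite ge_max => /andP[low0 low1] s.
have [sup_le_p p_le] : sup_diff Q s <= p /\ p <= Q (~~ s) s setT by case: s.
have -> : \int[mu]_y maxe (f s false y) (f s true y) =
          \int[mu]_y maxe (f s (~~ s) y) (f s s y).
  by case: s {sup_le_p p_le}; last by apply: eq_integral => y _; rewrite maxC.
rewrite (integral_maxe_densities (g1 := f s (~~ s)) (g2 := f s s) (m1 := Q s (~~ s)) (m2 := Q s s));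
  try solve [exact: mf | exact: f_ge0 | exact: Qf | exact: Q_setT_fin_num].
rewrite -(Q_complement s) leeD2r// (le_trans _ p_le)// (le_trans _ sup_le_p)//.
by apply: ereal_sup_ubound; exists [set y | f s s y < f s (~~ s) y] => //;
  rewrite -[X in measurable X]setTI; exact: measurable_lte.
Qed.

Lemma Q_fine_density dd z A : measurable A ->
  Q dd z A = \int[mu]_(y in A) (fine (f dd z y))%:E.
Proof.
have intf : mu.-integrable setT (f dd z).
  apply/integrableP; split=> //.
  under eq_integral do rewrite gee0_abs//.
  by rewrite -Qf// (le_lt_trans (Q_setT_le1 dd z)) ?ltey.
move=> mA; rewrite Qf//; apply: ge0_ae_eq_integral => //.
- exact: measurable_funTS.
- by apply: measurable_funTS; apply: measurableT_comp => //; apply: measurableT_comp.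
- by move=> y _; rewrite lee_fin fine_ge0.
- apply: filterS (integrable_ae measurableT intf) => y fy Ay.
  by rewrite fineK// fy.
Qed.

End density_condition.

Section construction.
Context (mu : {measure set R -> \bar R}) (h : bool -> bool -> R -> R) (pz p : R).
Hypothesis mh : forall dd z, measurable_fun setT (h dd z).
Hypothesis h_ge0 : forall dd z y, (0 <= h dd z y)%R.
Hypothesis Qh : forall dd z A, measurable A -> Q dd z A = \int[mu]_(y in A) (h dd z y)%:E.
Hypothesis pz01 : (0 < pz < 1)%R.
Hypothesis p_bounds : pdf_lower Q <= p%:E <= pdf_upper Q.

Let p_ge0 : (0 <= p)%R.
Proof. by case/andP: p_bounds; rewrite /pdf_lower ge_max lee_fin => /andP[]. Qed.

Let p_le_Q s : p%:E <= Q s (~~ s) setT.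
Proof. by case/andP: p_bounds => _; rewrite /pdf_upper le_min => /andP[]; case: s. Qed.

Let Q_diff_le_p s A : measurable A -> Q s (~~ s) A - Q s s A <= p%:E.
Proof.
move=> mA; have /andP[+ _] := p_bounds.
rewrite /pdf_lower !ge_max => /andP[lows _]; move/andP: lows => [l0 l1].
apply: (@le_trans _ _ (sup_diff Q s)); last by case: s {mA}.
by apply: ereal_sup_ubound; exists A.
Qed.

Definition q dd z := fine (Q dd z setT).

Lemma qE dd z : (q dd z)%:E = Q dd z setT.
Proof. by rewrite fineK// Q_setT_fin_num. Qed.

Lemma q_complement z : (q false z + q true z = 1)%R.
Proof. by apply: EFin_inj; rewrite EFinD !qE Q1. Qed.

Definition overlap s y := Num.min (h s (~~ s) y) (h s s y).

Lemma measurable_overlap s : measurable_fun setT (overlap s).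
Proof. exact: measurable_minr. Qed.

Lemma overlap_ge0 s y : (0 <= overlap s y)%R.
Proof. by rewrite le_min !h_ge0. Qed.

Lemma overlap_le s z y : (overlap s y <= h s z y)%R.
Proof. by case: s z => -[]; rewrite /overlap ge_min lexx ?orbT. Qed.

Lemma overlap_mass s :
  (0 <= q s (~~ s) - p <= fine (\int[mu]_y (overlap s y)%:E))%R.
Proof.
rewrite subr_ge0 -lee_fin qE p_le_Q/=.
have mEh dd z : measurable_fun setT (fun y => (h dd z y)%:E) by exact: measurableT_comp.
have hE_ge0 dd z y : 0 <= (h dd z y)%:E by rewrite lee_fin.
have -> : \int[mu]_y (overlap s y)%:E =
    \int[mu]_y mine (h s (~~ s) y)%:E (h s s y)%:E.
  by apply: eq_integral => y _; rewrite EFin_min.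
rewrite (integral_mine_densities (mEh s (~~ s)) (mEh s s) (hE_ge0 _ _) (hE_ge0 _ _)
  (Qh s (~~ s)) (Qh s s) (Q_setT_fin_num _ _) (Q_setT_fin_num _ _)).
set B := [set y | _ < _].
have mB : measurable B by rewrite -[B]setTI; exact: measurable_lte.
have fB dd z : Q dd z B \is a fin_num by rewrite measure_fin_num_sub ?Q_setT_fin_num.
rewrite -lee_fin -qE -(fineK (fB s (~~ s))) -(fineK (fB s s)) -!EFinB fineK//.
rewrite lee_fin lerB// -lee_fin EFinB !fineK//; exact: Q_diff_le_p.
Qed.

Definition taker s y :=
  (ratio (q s (~~ s) - p) (fine (\int[mu]_x (overlap s x)%:E)) * overlap s y)%R.

Lemma measurable_taker s : measurable_fun setT (taker s).
Proof. by apply: measurable_funM => //; exact: measurable_overlap. Qed.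

Lemma taker_ge0 s y : (0 <= taker s y)%R.
Proof.
have [/andP[t0 _] _] := ratioP (overlap_mass s).
by rewrite mulr_ge0// overlap_ge0.
Qed.

Lemma taker_le s z y : (taker s y <= h s z y)%R.
Proof.
have [/andP[_ t1] _] := ratioP (overlap_mass s).
by rewrite (le_trans _ (overlap_le s z y))// ler_piMl// overlap_ge0.
Qed.

Lemma integral_taker s : \int[mu]_y (taker s y)%:E = (q s (~~ s) - p)%:E.
Proof.
have [/andP[t0 _] tE] := ratioP (overlap_mass s).
under eq_integral do rewrite EFinM.
rewrite ge0_integralZl//; last 2 first.
- by apply: measurableT_comp => //; exact: measurable_overlap.
- by move=> y _; rewrite lee_fin overlap_ge0.
have fin : \int[mu]_y (overlap s y)%:E \is a fin_num.
  rewrite ge0_fin_numE; last by apply: integral_ge0 => y _; rewrite lee_fin overlap_ge0.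
  apply: (@le_lt_trans _ _ (Q s s setT)); last by rewrite (le_lt_trans (Q_setT_le1 s s)) ?ltey.
  rewrite Qh//; apply: ge0_le_integral => //.
  - by move=> y _; rewrite lee_fin overlap_ge0.
  - by apply: measurableT_comp => //; exact: measurable_overlap.
  - exact: measurableT_comp.
  - by move=> y _; rewrite lee_fin overlap_le.
by rewrite -(fineK fin) -EFinM tE.
Qed.

Definition rest dd z y := (h dd z y - taker dd y)%R.

Lemma measurable_rest dd z : measurable_fun setT (rest dd z).
Proof. by apply: measurable_funB => //; exact: measurable_taker. Qed.

Lemma rest_ge0 dd z y : (0 <= rest dd z y)%R.
Proof. by rewrite subr_ge0 taker_le. Qed.

Lemma Q_taker_rest dd z A : measurable A ->
  Q dd z A = \int[mu]_(y in A) (taker dd y)%:E + \int[mu]_(y in A) (rest dd z y)%:E.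
Proof.
move=> mA; rewrite -ge0_integralD//; last 4 first.
- by move=> y _; rewrite lee_fin taker_ge0.
- by apply/measurable_funTS/measurableT_comp => //; exact: measurable_taker.
- by move=> y _; rewrite lee_fin rest_ge0.
- by apply/measurable_funTS/measurableT_comp => //; exact: measurable_rest.
by rewrite Qh//; apply: eq_integral => y _; rewrite /rest -EFinD addrC subrK.
Qed.

Lemma integral_rest dd z :
  \int[mu]_y (rest dd z y)%:E = (q dd z - (q dd (~~ dd) - p))%:E.
Proof. by apply: EFin_addeK; rewrite -integral_taker -Q_taker_rest// qE. Qed.

(* A type is (D0, D1): (b, b) are the b-takers, (false, true) the compliers and
   (true, false) the defiers; [type_density t d] is the sub-density of Y_d on type t. *)
Definition type_density (t : bool * bool) (dd : bool) : R -> R :=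
  match t with
  | (false, true) => rest dd dd
  | (true, false) => rest dd (~~ dd)
  | (b, _) => taker b
  end.

Definition type_mass (t : bool * bool) : R :=
  match t with
  | (false, true) => q true true - q true false + p
  | (true, false) => p
  | (b, _) => q b (~~ b) - p
  end.

Lemma measurable_type_density t dd : measurable_fun setT (type_density t dd).
Proof. by case: t => -[] []; rewrite /=; exact: measurable_rest || exact: measurable_taker. Qed.

Lemma type_density_ge0 t dd y : (0 <= type_density t dd y)%R.
Proof. by case: t => -[] []; rewrite /=; exact: rest_ge0 || exact: taker_ge0. Qed.

Lemma integral_type_density t dd :
  \int[mu]_y (type_density t dd y)%:E = (type_mass t)%:E.
Proof.
case: t => -[] []; case: dd; rewrite /= ?integral_rest ?integral_taker//; congr EFin;
  have := q_complement true; have := q_complement false; lra.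
Qed.

Lemma type_mass_sum :
  (type_mass (true, true) + (type_mass (false, false) +
   (type_mass (false, true) + type_mass (true, false))) = 1)%R.
Proof. by rewrite /= -(q_complement true); lra. Qed.

Definition Y_law t dd :=
  density_measure mu (measurable_type_density t dd) (type_density_ge0 t dd).

Lemma Y_law_setT t dd : Y_law t dd setT = (type_mass t)%:E.
Proof. exact: integral_type_density. Qed.

(* Given the type, Y_1 and Y_0 are independent; normalizing the law of Y_0 keeps
   the mass of the type. *)
Definition type_law t := Y_law t true \x mnormalize (Y_law t false) (@dirac _ R 0%R R).

Lemma type_lawX1 t A : measurable A -> type_law t (A `*` setT) = Y_law t true A.
Proof.
move=> mA; rewrite /type_law product_measure1E// [X in _ * X](_ : _ = 1) ?mule1//.
exact: probability_setT.
Qed.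

Lemma type_lawX0 t A : measurable A -> type_law t (setT `*` A) = Y_law t false A.
Proof.
move=> mA; rewrite /type_law product_measure1E//.
exact: mass_mul_mnormalize mA (Y_law_setT t true) (Y_law_setT t false).
Qed.

Definition type_of_nat (k : nat) : bool * bool :=
  match k with 0 => (true, true) | 1 => (false, false) | 2 => (false, true) | _ => (true, false) end.

Definition latent_law := msum (fun k => type_law (type_of_nat k) \x \d_(type_of_nat k)) 4.

Lemma latent_lawX S (xb : bool * bool -> bool) : measurable S ->
  latent_law (S `*` [set t | xb t]) =
  (if xb (true, true) then type_law (true, true) S else 0) +
  ((if xb (false, false) then type_law (false, false) S else 0) +
  ((if xb (false, true) then type_law (false, true) S else 0) +
   (if xb (true, false) then type_law (true, false) S else 0))).
Proof.
move=> mS; rewrite /latent_law /msum 3!big_ord_recl big_ord1 /=.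
by rewrite !product_diracE//; exact: measurable_bool_pair.
Qed.

Lemma latent_law_setT : latent_law setT = 1.
Proof.
have -> : [set: (R * R) * (bool * bool)] = setT `*` [set t | true].
  by apply/seteqP; split.
rewrite latent_lawX// /= -setXTT !type_lawX1// !Y_law_setT -!EFinD.
by rewrite type_mass_sum.
Qed.

Lemma latent_law_observed dd z A : measurable A ->
  latent_law ((if dd then A `*` setT else setT `*` A) `*`
              [set t | (if z then t.2 else t.1) == dd]) = Q dd z A.
Proof.
move=> mA; have mYA : measurable (if dd then A `*` setT else setT `*` A).
  by case: dd; exact: measurableX.
rewrite latent_lawX// (Q_taker_rest dd z mA).
by case: dd mYA; case: z => mYA /=; rewrite ?type_lawX1 ?type_lawX0 ?adde0 ?add0e.
Qed.

Definition sample_law := latent_law \x bernoulli_prob pz.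

Lemma sample_lawX C B : measurable C -> measurable B ->
  sample_law (C `*` B) = latent_law C * bernoulli_prob pz B.
Proof. by move=> mC mB; rewrite /sample_law product_measure1E. Qed.

Lemma sample_law_setT : sample_law setT = 1.
Proof.
rewrite -setXTT sample_lawX// latent_law_setT mul1e.
by apply: probability_setT.
Qed.

(* A mass-one measure is its own normalization: the Dirac default is never used. *)
Definition sample_prob : probability ((R * R) * (bool * bool) * bool)%type R :=
  mnormalize sample_law (@dirac _ _ ((0%R : R, 0%R : R), (false, false), false) R).

Lemma sample_probE A : sample_prob A = sample_law A.
Proof. exact: mnormalize_mass1 sample_law_setT. Qed.

(* Sample points are ((Y_1, Y_0), (D_0, D_1), Z); the outcome ignores the
   instrument, which is ER. *)
Definition sample_Y (dd z : bool) (w : (R * R) * (bool * bool) * bool) : R :=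
  if dd then w.1.1.1 else w.1.1.2.

Definition sample_D0 (w : (R * R) * (bool * bool) * bool) := w.1.2.1.
Definition sample_D1 (w : (R * R) * (bool * bool) * bool) := w.1.2.2.
Definition sample_Z (w : (R * R) * (bool * bool) * bool) := w.2.

Definition latent_of (x : (R * R) * (bool * bool)) : R * R * R * R * bool * bool :=
  (x.1.1, x.1.1, x.1.2, x.1.2, x.2.2, x.2.1).

Lemma measurable_latent_of : measurable_fun setT latent_of.
Proof.
have mfst1 : measurable_fun setT (fun x : (R * R) * (bool * bool) => x.1.1).
  by apply: measurableT_comp; [exact: measurable_fst | exact: measurable_fst].
have msnd1 : measurable_fun setT (fun x : (R * R) * (bool * bool) => x.1.2).
  by apply: measurableT_comp; [exact: measurable_snd | exact: measurable_fst].
have mfst2 : measurable_fun setT (fun x : (R * R) * (bool * bool) => x.2.1).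
  by apply: measurableT_comp; [exact: measurable_fst | exact: measurable_snd].
have msnd2 : measurable_fun setT (fun x : (R * R) * (bool * bool) => x.2.2).
  by apply: measurableT_comp; [exact: measurable_snd | exact: measurable_snd].
by repeat apply: measurable_fun_pair.
Qed.

Lemma sample_prob_Z z : sample_prob [set w | sample_Z w = z] = bernoulli_prob pz [set z].
Proof.
rewrite sample_probE (_ : [set w | _] = setT `*` [set z]).
  by rewrite sample_lawX// latent_law_setT mul1e.
by apply/seteqP; split => -[x b] /=; [move=> ->|case].
Qed.

Lemma sample_prob_independent z E : measurable E ->
  sample_prob ([set w | sample_Z w = z] `&`
               latent_vec sample_Y sample_D0 sample_D1 @^-1` E) =
  sample_prob [set w | sample_Z w = z] *
  sample_prob (latent_vec sample_Y sample_D0 sample_D1 @^-1` E).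
Proof.
move=> mE; have mLE : measurable (latent_of @^-1` E).
  by rewrite -[X in measurable X]setTI; exact: measurable_latent_of.
rewrite sample_prob_Z !sample_probE.
rewrite (_ : [set w | sample_Z w = z] `&` _ = (latent_of @^-1` E) `*` [set z]); last first.
  by apply/seteqP; split => -[x b] /= [? ?]; split.
rewrite (_ : latent_vec sample_Y sample_D0 sample_D1 @^-1` E = (latent_of @^-1` E) `*` setT).
  by rewrite !sample_lawX// probability_setT mule1 muleC.
by apply/seteqP; split => -[x b] //= [].
Qed.

Lemma sample_prob_observed (A : set R) (dd z : bool) : measurable A ->
  sample_prob [set w | A (obsY sample_Y sample_D0 sample_D1 sample_Z w) /\
                       obsD sample_D0 sample_D1 sample_Z w = dd /\ sample_Z w = z] =
  Q dd z A * sample_prob [set w | sample_Z w = z].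
Proof.
move=> mA; rewrite sample_prob_Z sample_probE.
rewrite (_ : [set w | _] = ((if dd then A `*` setT else setT `*` A) `*`
    [set t | (if z then t.2 else t.1) == dd]) `*` [set z]); last first.
  apply/seteqP; split => -[[[y1 y0] [d0 d1]] b];
  rewrite /obsY /obsD /sample_Y /sample_D0 /sample_D1 /sample_Z /=;
  case: b; case: z; case: dd; case: d0; case: d1 => /=; intuition; try congruence;
  repeat match goal with H : is_true (_ == _) |- _ => move: H; rewrite /= => H end; done.
rewrite sample_lawX ?latent_law_observed//.
apply: measurableX; last exact: measurable_bool_pair.
by case: dd; exact: measurableX.
Qed.

Lemma sample_model :
  RA_ER_model pz Q sample_prob sample_Y sample_D0 sample_D1 sample_Z.
Proof.
split; [|split; [|split; [|split; [|split; [|split; [|split]]]]]].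
- move=> dd z; case: dd;
  repeat (apply: measurableT_comp; [exact: measurable_fst || exact: measurable_snd|]);
  exact: measurable_fst || exact: measurable_snd.
- repeat (apply: measurableT_comp; [exact: measurable_fst || exact: measurable_snd|]);
  exact: measurable_fst.
- repeat (apply: measurableT_comp; [exact: measurable_fst || exact: measurable_snd|]);
  exact: measurable_fst.
- exact: measurable_snd.
- exact: sample_prob_independent.
- by [].
- rewrite (_ : [set w | sample_Z w] = [set w | sample_Z w = true])// sample_prob_Z.
  by rewrite bernoulli_prob_setT1//; case/andP: pz01 => /ltW -> /ltW ->.
- by move=> A mA dd z; exact: sample_prob_observed.
Qed.

Lemma sample_defiers :
  sample_prob [set w | sample_D0 w = true /\ sample_D1 w = false] = p%:E.
Proof.
rewrite sample_probE (_ : [set w | _] = (setT `*` [set t | t == (true, false)]) `*` setT).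
  rewrite sample_lawX//; last by apply: measurableX => //; exact: measurable_bool_pair.
  rewrite probability_setT mule1 latent_lawX// /= -setXTT type_lawX1// Y_law_setT.
  by rewrite !add0e.
apply/seteqP; split => -[[y [d0 d1]] b]; rewrite /sample_D0 /sample_D1 /=;
  by case: d0; case: d1 => /=; intuition.
Qed.

Lemma defiers_identified : pdf_identified_set pz Q p.
Proof.
exists _, _, sample_prob, sample_Y, sample_D0, sample_D1, sample_Z.
by split; [exact: sample_model | exact: sample_defiers].
Qed.

End construction.

End observed.

Theorem proposition1 (R : realType) (pz : R)
  (Q : bool -> bool -> {measure set R -> \bar R})
  (mu : {measure set R -> \bar R}) (f : bool -> bool -> R -> \bar R) :
  0 < pz < 1 ->
  (forall z : bool, (Q false z setT + Q true z setT = 1)%E) ->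
  (forall dd z : bool, measurable_fun setT (f dd z)) ->
  (forall (dd z : bool) (y : R), (0 <= f dd z y)%E) ->
  (forall (dd z : bool) (A : set R), measurable A ->
     Q dd z A = (\int[mu]_(y in A) f dd z y)%E) ->
  (density_cond mu f ->
     pdf_identified_set pz (fun dd z => Q dd z) =
     [set p : R | (pdf_lower (fun dd z => Q dd z) <= p%:E <= pdf_upper (fun dd z => Q dd z))%E])
  /\ (~ density_cond mu f -> pdf_identified_set pz (fun dd z => Q dd z) = set0)
  /\ ((exists p : R, pdf_identified_set pz (fun dd z => Q dd z) p) -> density_cond mu f).
Proof.
move=> pz01 Q1 mf f_ge0 Qf.
have necessary p : pdf_identified_set pz (fun dd z => Q dd z) p ->
    (pdf_lower (fun dd z => Q dd z) <= p%:E <= pdf_upper (fun dd z => Q dd z))%E.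
  by case=> [d [Om [P [Yp [D0 [D1 [Z [model <-]]]]]]]]; exact: defiers_in_bounds model.
have sufficient p :
    (pdf_lower (fun dd z => Q dd z) <= p%:E <= pdf_upper (fun dd z => Q dd z))%E ->
    pdf_identified_set pz (fun dd z => Q dd z) p.
  apply: (defiers_identified Q1 _ _ (Q_fine_density Q1 mf f_ge0 Qf)) => //.
  - by move=> dd z; apply: measurableT_comp => //; exact: fine_measurable.
  - by move=> dd z y; exact: fine_ge0.
have density p : pdf_identified_set pz (fun dd z => Q dd z) p -> density_cond mu f.
  by move/necessary; exact: density_cond_of_bounds.
split; first by move=> _; apply/seteqP; split => p; [exact: necessary | exact: sufficient].
split; first by move=> nD; apply/seteqP; split => // p /density.
by case=> p /density.
Qed.
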